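(* Let $\operatorname{R}_4=\{a_0,a_1,a_2,a_3\}$ be the dihedral quandle of order $4$, with $a_ia_j=a_{2j-i \pmod 4}$. Then the quandle ring $\mathbb{Z}[\operatorname{R}_4]$ contains a unique maximal quandle, namely $$M=\Big\{t\big(a_0+\alpha(a_2-a_0)\big)+(1-t)\big(a_1+\beta(a_3-a_1)\big)~|~t\in\{0,1\},~\alpha,\beta\in\mathbb{Z}\Big\}.$$
   Context: A quandle is a non-empty set with a binary operation $(x,y)\mapsto xy$ such that $xx=x$; for all $x,y$ there is a unique $z$ with $x=zy$; and $(xy)z=(xz)(yz)$. For a quandle $Q$, the quandle ring $\mathbb{Z}[Q]$ is the free abelian group with basis $Q$, with multiplication $\big(\sum_i\alpha_i q_i\big)\big(\sum_j\beta_j q_j\big)=\sum_{i,j}\alpha_i\beta_j (q_iq_j)$. A quandle in $\mathbb{Z}[Q]$ is a subset closed under the ring multiplication which is a quandle under the restricted multiplication; a maximal quandle is a non-zero quandle in $\mathbb{Z}[Q]$ (i.e. not equal to $\{0\}$) not properly contained in any other quandle in $\mathbb{Z}[Q]$. *)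

From mathcomp Require Import all_boot all_order all_algebra.
Set Implicit Arguments. Unset Strict Implicit. Unset Printing Implicit Defensive.
Import Order.TTheory GRing.Theory Num.Theory.
Local Open Scope ring_scope.

Definition r4op (i j : 'I_4) : 'I_4 := inord ((2 * j + 4 - i) %% 4)%N.

(* The quandle ring Z[Q] of a finite quandle (Q, op): elements are integer
   coefficient vectors, i.e. functions Q -> int (finitely supported since Q finite). *)
Definition qring (Q : finType) := {ffun Q -> int}.

Definition qmul (Q : finType) (op : Q -> Q -> Q) (u v : qring Q) : qring Q :=
  [ffun k => \sum_(i : Q) \sum_(j : Q | op i j == k) u i * v j].

Definition basis (Q : finType) (q : Q) : qring Q := [ffun k => ((k == q) : nat)%:Z].

Definition is_quandle_in (Q : finType) (op : Q -> Q -> Q) (S : qring Q -> Prop) : Prop :=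
  [/\ (exists x, S x),
      (forall x y, S x -> S y -> S (qmul op x y)),
      (forall x, S x -> qmul op x x = x),
      (forall x y, S x -> S y -> exists! z, S z /\ x = qmul op z y) &
      (forall x y z, S x -> S y -> S z ->
         qmul op (qmul op x y) z = qmul op (qmul op x z) (qmul op y z))].

Definition is_maximal_quandle (Q : finType) (op : Q -> Q -> Q) (S : qring Q -> Prop) : Prop :=
  [/\ is_quandle_in op S,
      ~ (forall x, S x <-> x = 0) &
      (forall T, is_quandle_in op T -> (forall x, S x -> T x) -> (forall x, T x -> S x))].

Definition a (i : 'I_4) : qring 'I_4 := basis i.

Definition M4 : qring 'I_4 -> Prop := fun x =>
  exists (t : int) (alpha beta : int), (t = 0 \/ t = 1) /\
    x = (a (inord 0) + (a (inord 2) - a (inord 0)) *~ alpha) *~ t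
        + (a (inord 1) + (a (inord 3) - a (inord 1)) *~ beta) *~ (1 - t).

(* In Z[R_4] write E = x0 + x2 and O = x1 + x3 for the coefficient sums over
   the two orbits {a0, a2} and {a1, a3}. Squaring multiplies E and O by E + O,
   and the differences x0 - x2, x1 - x3 by E - O and O - E. Solving x x = x
   over the integers shows that the nonzero idempotents are exactly the
   elements of M. Conversely, a quandle in Z[Q] consists of idempotents, and
   it contains 0 only if it is {0}, since y = z 0 = 0 for all its elements y.
   Hence every nonzero quandle lies in M, and M, being itself a quandle
   (right multiplication by an element of M is an involutive automorphism),
   is the unique maximal one. *)
From mathcomp Require Import all_boot all_order all_algebra.
From mathcomp Require Import zify ring.
Set Implicit Arguments. Unset Strict Implicit. Unset Printing Implicit Defensive.
Import Order.TTheory GRing.Theory Num.Theory.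
Local Open Scope ring_scope.

Lemma mulf_eq0_neq0 (R : idomainType) (m n : R) : m * n = 0 -> n != 0 -> m = 0.
Proof. by move=> mn0 /mulIf; apply; rewrite mul0r. Qed.

Section QuandleRing.

Variables (Q : finType) (op : Q -> Q -> Q).

Lemma qmulr0 (u : qring Q) : qmul op u 0 = 0.
Proof.
apply/ffunP => k; rewrite !ffunE big1 // => i _.
by rewrite big1 // => j _; rewrite ffunE mulr0.
Qed.

Lemma quandle_in_neq0 (S : qring Q -> Prop) x :
  is_quandle_in op S -> ~ (forall y, S y <-> y = 0) -> S x -> x <> 0.
Proof.
move=> [_ _ _ S_div _] S_neq0 Sx x0; apply: S_neq0 => y; split => [Sy|->]; last by rewrite -x0.
by have [z [[_ ->] _]] := S_div y x Sy Sx; rewrite x0 qmulr0.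
Qed.

Lemma greatest_quandle_unique_maximal (M : qring Q -> Prop) :
  is_quandle_in op M -> ~ (forall x, M x <-> x = 0) ->
  (forall S, is_quandle_in op S -> ~ (forall x, S x <-> x = 0) ->
     forall x, S x -> M x) ->
  is_maximal_quandle op M /\
  (forall S, is_maximal_quandle op S -> forall x, S x <-> M x).
Proof.
move=> M_quandle M_neq0 M_greatest; split.
  split=> // T T_quandle MT; apply: M_greatest => // T0; apply: M_neq0 => x.
  have [[m Mm] _ _ _ _] := M_quandle.
  by split=> [/MT/T0 //|->]; rewrite -(T0 m).1 //; apply: MT.
move=> S [S_quandle S_neq0 S_max] x; split; first exact: M_greatest.
by apply: S_max => //; apply: M_greatest.
Qed.

End QuandleRing.

Definition vec4 (c0 c1 c2 c3 : int) : qring 'I_4 :=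
  [ffun k : 'I_4 => nth 0 [:: c0; c1; c2; c3] k].

Lemma vec4E (x : qring 'I_4) :
  x = vec4 (x (inord 0)) (x (inord 1)) (x (inord 2)) (x (inord 3)).
Proof.
apply/ffunP => -[[|[|[|[|k]]]] lt_k4] //; rewrite ffunE; congr (x _).
all: by apply/val_inj; rewrite /= inordK.
Qed.

Lemma vec4_inj c0 c1 c2 c3 d0 d1 d2 d3 :
  vec4 c0 c1 c2 c3 = vec4 d0 d1 d2 d3 -> [/\ c0 = d0, c1 = d1, c2 = d2 & c3 = d3].
Proof.
move=> /ffunP eq_cd.
have := eq_cd (inord 0); have := eq_cd (inord 1).
have := eq_cd (inord 2); have := eq_cd (inord 3).
by rewrite !ffunE !inordK.
Qed.

Lemma vec4_0 : 0 = vec4 0 0 0 0.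
Proof. by apply/ffunP => -[[|[|[|[|k]]]] lt_k4]; rewrite !ffunE. Qed.

Lemma vec4D c0 c1 c2 c3 d0 d1 d2 d3 :
  vec4 c0 c1 c2 c3 + vec4 d0 d1 d2 d3 = vec4 (c0 + d0) (c1 + d1) (c2 + d2) (c3 + d3).
Proof. by apply/ffunP => -[[|[|[|[|k]]]] lt_k4]; rewrite !ffunE. Qed.

Lemma vec4N c0 c1 c2 c3 : - vec4 c0 c1 c2 c3 = vec4 (- c0) (- c1) (- c2) (- c3).
Proof. by apply/ffunP => -[[|[|[|[|k]]]] lt_k4]; rewrite !ffunE. Qed.

Lemma vec4Mz c0 c1 c2 c3 n :
  vec4 c0 c1 c2 c3 *~ n = vec4 (c0 * n) (c1 * n) (c2 * n) (c3 * n).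
Proof.
by apply/ffunP => -[[|[|[|[|k]]]] lt_k4]; rewrite ffunMzE !ffunE /= ?mulrzz.
Qed.

Lemma a_vec4 :
  [/\ a (inord 0) = vec4 1 0 0 0, a (inord 1) = vec4 0 1 0 0,
      a (inord 2) = vec4 0 0 1 0 & a (inord 3) = vec4 0 0 0 1].
Proof.
by split; apply/ffunP => -[[|[|[|[|k]]]] lt_k4] //; rewrite !ffunE /= -val_eqE /= inordK.
Qed.

Lemma r4opE (i j : 'I_4) : val (r4op i j) = ((2 * j + 4 - i) %% 4)%N.
Proof. by rewrite /= inordK // ltn_pmod. Qed.

Lemma qmul_vec4 c0 c1 c2 c3 d0 d1 d2 d3 :
  qmul r4op (vec4 c0 c1 c2 c3) (vec4 d0 d1 d2 d3) =
  vec4 (c0 * (d0 + d2) + c2 * (d1 + d3)) (c1 * (d1 + d3) + c3 * (d0 + d2))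
       (c2 * (d0 + d2) + c0 * (d1 + d3)) (c3 * (d1 + d3) + c1 * (d0 + d2)).
Proof.
apply/ffunP => -[[|[|[|[|k]]]] lt_k4]; rewrite !ffunE //.
all: under eq_bigr do rewrite big_mkcond /=.
all: by rewrite !big_ord_recl !big_ord0 /= !ffunE -!val_eqE !r4opE /=; ring.
Qed.

Lemma M4P x :
  M4 x <-> (exists al, x = vec4 (1 - al) 0 al 0) \/ (exists be, x = vec4 0 (1 - be) 0 be).
Proof.
rewrite /M4; have [-> -> -> ->] := a_vec4; split.
  move=> [t [al [be [[->|->] ->]]]]; rewrite !(vec4N, vec4D, vec4Mz).
    by right; exists be; congr vec4; ring.
  by left; exists al; congr vec4; ring.
move=> [[al ->]|[be ->]]; [exists 1, al, 0 | exists 0, 0, be].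
all: by split; [lia | rewrite !(vec4N, vec4D, vec4Mz); congr vec4; ring].
Qed.

Lemma M4_qmul x y : M4 x -> M4 y -> M4 (qmul r4op x y).
Proof.
move=> /M4P [[al ->]|[be ->]] /M4P [[al' ->]|[be' ->]]; rewrite qmul_vec4; apply/M4P.
- by left; exists al; congr vec4; ring.
- by left; exists (1 - al); congr vec4; ring.
- by right; exists (1 - be); congr vec4; ring.
- by right; exists be; congr vec4; ring.
Qed.

Lemma M4_qmulxx x : M4 x -> qmul r4op x x = x.
Proof. by move=> /M4P [[al ->]|[be ->]]; rewrite qmul_vec4; congr vec4; ring. Qed.

Lemma M4_qmulK y z : M4 y -> qmul r4op (qmul r4op z y) y = z.
Proof. by move=> /M4P [[al ->]|[be ->]]; rewrite [z]vec4E !qmul_vec4; congr vec4; ring. Qed.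

Lemma M4_qmul_distr x y z : M4 y -> M4 z ->
  qmul r4op (qmul r4op x y) z = qmul r4op (qmul r4op x z) (qmul r4op y z).
Proof.
move=> /M4P [[al ->]|[be ->]] /M4P [[al' ->]|[be' ->]].
all: by rewrite [x]vec4E !qmul_vec4; congr vec4; ring.
Qed.

Lemma M4_quandle : is_quandle_in r4op M4.
Proof.
split.
- by exists (vec4 (1 - 0) 0 0 0); apply/M4P; left; exists 0.
- exact: M4_qmul.
- exact: M4_qmulxx.
- move=> x y Mx My; exists (qmul r4op x y); split.
    by split; [apply: M4_qmul | rewrite M4_qmulK].
  by move=> z [_ ->]; rewrite M4_qmulK.
- by move=> x y z _; apply: M4_qmul_distr.
Qed.

Lemma M4_neq0 : ~ (forall x, M4 x <-> x = 0).
Proof.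
have M_a0 : M4 (vec4 (1 - 0) 0 0 0) by apply/M4P; left; exists 0.
by move=> /(_ (vec4 (1 - 0) 0 0 0)) [/(_ M_a0)]; rewrite vec4_0 => /vec4_inj [].
Qed.

Lemma qmul_vec4_idem c0 c1 c2 c3 :
  qmul r4op (vec4 c0 c1 c2 c3) (vec4 c0 c1 c2 c3) = vec4 c0 c1 c2 c3 ->
  [/\ (c0 + c2) * (c0 + c2 + (c1 + c3) - 1) = 0,
      (c1 + c3) * (c0 + c2 + (c1 + c3) - 1) = 0,
      (c0 - c2) * (c0 + c2 - (c1 + c3) - 1) = 0 &
      (c1 - c3) * (c1 + c3 - (c0 + c2) - 1) = 0].
Proof. by rewrite qmul_vec4 => /vec4_inj [e0 e1 e2 e3]; split; nia. Qed.

Lemma idem_neq0_M4 x : qmul r4op x x = x -> x <> 0 -> M4 x.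
Proof.
rewrite [x]vec4E M4P vec4_0; set c0 := x _; set c1 := x _; set c2 := x _; set c3 := x _.
move=> /qmul_vec4_idem [hE hO hD hF] x_neq0.
have [EO1|EO_neq1] := eqVneq (c0 + c2 + (c1 + c3)) 1; last first.
  have E0 : c0 + c2 = 0 by apply: mulf_eq0_neq0 hE _; rewrite subr_eq0.
  have O0 : c1 + c3 = 0 by apply: mulf_eq0_neq0 hO _; rewrite subr_eq0.
  by case: x_neq0; rewrite E0 O0 in hD hF; congr vec4; lia.
have [O0|O_neq0] := eqVneq (c1 + c3) 0.
  rewrite O0 addr0 in EO1; rewrite O0 EO1 in hF.
  by left; exists c2; congr vec4; lia.
have [E0|E_neq0] := eqVneq (c0 + c2) 0.
  rewrite E0 add0r in EO1; rewrite E0 EO1 in hD.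
  by right; exists c3; congr vec4; lia.
have D0 : c0 - c2 = 0 by apply: mulf_eq0_neq0 hD _; apply/eqP; lia.
have F0 : c1 - c3 = 0 by apply: mulf_eq0_neq0 hF _; apply/eqP; lia.
(* Now c0 + c2 + (c1 + c3) = 2 (c0 + c1) is even. *)
exfalso; lia.
Qed.

Theorem theorem5p3 :
  is_maximal_quandle r4op M4 /\
  (forall S : qring 'I_4 -> Prop, is_maximal_quandle r4op S -> forall x, S x <-> M4 x).
Proof.
apply: greatest_quandle_unique_maximal M4_quandle M4_neq0 _ => S S_quandle S_neq0 x Sx.
have [_ _ S_idem _ _] := S_quandle.
exact: idem_neq0_M4 (S_idem x Sx) (quandle_in_neq0 S_quandle S_neq0 Sx).
Qed.
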